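(* Let $Q$ be a commutative automorphic loop of nilpotency class $3$, let $x,y\in Q$, and set $u_1=(x,x,y)$, $u_2=(x,y,y)$, $z_2=(x,x,u_2)$, $z_3=(x,y,u_1)$, $z_4=(x,y,u_2)$, $z_5=(y,x,u_1)$, $z_6=(y,x,u_2)$, $z_7=(y,y,u_1)$. Then $z_2=z_3=z_5$ and $z_4=z_6=z_7$.
   Context: A loop is a set with a binary operation such that all left and right translations $L_a:b\mapsto ab$, $R_a:b\mapsto ba$ are bijections and there is a two-sided identity $1$. The inner mapping group is the stabilizer of $1$ in the group generated by all translations; $Q$ is automorphic if all inner mappings are automorphisms. The associator $(a,b,c)$ is defined by $(ab)c=(a(bc))(a,b,c)$. The center $Z(Q)$ is the set of elements fixed by all inner mappings; $Z_0=1$, $Z_{i+1}(Q)$ is the preimage of $Z(Q/Z_i(Q))$, and $Q$ has nilpotency class $n$ if $Z_{n-1}(Q)\neq Q=Z_n(Q)$. *)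

From Stdlib Require Import List.
Import ListNotations.
Set Implicit Arguments.

(* A loop in the signature ( mul, ldiv, rdiv, 1 ): the equations below say exactly that
   every left translation L_a : b |-> a*b and right translation R_a : b |-> b*a
   is a bijection (with inverses b |-> a\b and b |-> b/a), and 1 is a
   two-sided identity. *)
Record loop := Loop {
  carrier :> Type;
  mul : carrier -> carrier -> carrier;
  ldiv : carrier -> carrier -> carrier;
  rdiv : carrier -> carrier -> carrier;
  one : carrier;
  mul_ldiv : forall a b, mul a (ldiv a b) = b;
  ldiv_mul : forall a b, ldiv a (mul a b) = b;
  rdiv_mul : forall a b, mul (rdiv b a) a = b;
  mul_rdiv : forall a b, rdiv (mul b a) a = b;
  mul1l : forall a, mul one a = a;
  mul1r : forall a, mul a one = a
}.

Section LoopDefs.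
Variable Q : loop.

Inductive transl : Type :=
| TL (a : Q)
| TR (a : Q)
| TLi (a : Q)
| TRi (a : Q).

Definition transl_app (t : transl) (x : Q) : Q :=
  match t with
  | TL a => mul Q a x
  | TR a => mul Q x a
  | TLi a => ldiv Q a x
  | TRi a => rdiv Q x a
  end.

(* A word in the generators; its action is the composite map. The elements of
   the group generated by all translations are exactly the maps [act w]. *)
Definition act (w : list transl) (x : Q) : Q := fold_right transl_app x w.

Definition inner_mapping (f : Q -> Q) : Prop :=
  exists w, f = act w /\ act w (one Q) = one Q.

Definition automorphic : Prop :=
  forall f, inner_mapping f -> forall a b, f (mul Q a b) = mul Q (f a) (f b).

Definition commutative : Prop := forall a b : Q, mul Q a b = mul Q b a.

Definition assoc (a b c : Q) : Q :=
  ldiv Q (mul Q a (mul Q b c)) (mul Q (mul Q a b) c).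

Definition cong (N : Q -> Prop) (a b : Q) : Prop := exists n, N n /\ a = mul Q b n.

(* Z_0 = 1.  Z_{i+1} = preimage of Z(Q/Z_i), where the
   quotient loop Q/Z_i is modelled by Q with equality replaced by the coset
   relation modulo Z_i: its translations (and inverses) are induced by those of Q,
   so its multiplication group consists of the maps induced by the words [act w];
   such a map is an inner mapping of Q/Z_i iff it fixes the coset of 1, and xZ_i
   is central iff it is fixed by all inner mappings of Q/Z_i. *)
Fixpoint Zc (i : nat) : Q -> Prop :=
  match i with
  | 0 => fun x => x = one Q
  | S i' => fun x => forall w : list transl,
      cong (Zc i') (act w (one Q)) (one Q) -> cong (Zc i') (act w x) x
  end.

Definition nilpotency_class (n : nat) : Prop :=
  (forall x, Zc n x) /\
  match n with
  | 0 => True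
  | S n' => exists x, ~ Zc n' x
  end.

End LoopDefs.
Arguments assoc : clear implicits.

(* In a loop of class at most 3 every inner mapping moves each element by a factor from
   the second centre Z2, and with commutativity and the automorphic property this forces
   every associator (a,b,c) into Z2 and makes it central once b or c lies in Z2.
   Associators are moreover fixed by the inner mappings that act trivially modulo Z(Q);
   this makes (a,b,-) and (a,-,b) multiplicative on associators and lets (p,q,e) ignore
   Z2-factors of q.  Applying the inner mapping L(a,b) to the associators (a,a,b) and
   (a,b,b) and expanding with these rules yields (a,a,(a,b,b)) = (a,b,(a,a,b)) =
   (b,a,(a,a,b)).  Finally (a,b,c)(c,b,a) = 1 by commutativity, so (p,q,(x,y,y)) is the
   inverse of (p,q,(y,y,x)), and the remaining equalities are the first ones for (y,x). *)
From Stdlib Require Import List.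
Import ListNotations.

Section CommutativeAutomorphicLoop.
Variable Q : loop.
Hypothesis hcomm : commutative Q.
Hypothesis haut : automorphic Q.

Local Notation "a ** b" := (mul Q a b) (at level 40, left associativity).
Local Notation ld := (ldiv Q).
Local Notation rd := (rdiv Q).
Local Notation "1" := (one Q).

Lemma mul_lcancel a b c : a ** b = a ** c -> b = c.
Proof. intro H. rewrite <- (ldiv_mul Q a b), H. apply ldiv_mul. Qed.

Lemma mul_rcancel a b c : b ** a = c ** a -> b = c.
Proof. intro H. rewrite <- (mul_rdiv Q a b), H. apply mul_rdiv. Qed.

Lemma mul_eq1_lcancel s s' t : s ** t = 1 -> s' ** t = 1 -> s = s'.
Proof. intros H1 H2. apply (mul_rcancel t). rewrite H1, H2. auto. Qed.

Lemma ldiv_unique a b c : a ** c = b -> ld a b = c.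
Proof. intro H. rewrite <- H. apply ldiv_mul. Qed.

Lemma rdiv_unique a b c : c ** a = b -> rd b a = c.
Proof. intro H. rewrite <- H. apply mul_rdiv. Qed.

Definition inner_word (w : list (transl Q)) := act w 1 = 1.

Lemma inner_mul w a b : inner_word w -> act w (a ** b) = act w a ** act w b.
Proof. intro H. apply haut. exists w. split; auto. Qed.

Lemma inner_ldiv w a b : inner_word w -> act w (ld a b) = ld (act w a) (act w b).
Proof.
  intro H. symmetry. apply ldiv_unique. rewrite <- inner_mul by auto.
  rewrite mul_ldiv. auto.
Qed.

Lemma inner_rdiv w a b : inner_word w -> act w (rd a b) = rd (act w a) (act w b).
Proof.
  intro H. symmetry. apply rdiv_unique. rewrite <- inner_mul by auto.
  rewrite rdiv_mul. auto.
Qed.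

Lemma inner_assoc w a b c :
  inner_word w -> act w (assoc Q a b c) = assoc Q (act w a) (act w b) (act w c).
Proof. intro H. unfold assoc. rewrite inner_ldiv, !inner_mul by auto. auto. Qed.

Definition Lword (a b : Q) : list (transl Q) := [TLi Q (a ** b); TL Q a; TL Q b].
Definition Mword (a b : Q) : list (transl Q) := [TLi Q (a ** b); TR Q b; TL Q a].

Lemma act_Lword a b x : act (Lword a b) x = ld (a ** b) (a ** (b ** x)).
Proof. reflexivity. Qed.

Lemma act_Mword a b x : act (Mword a b) x = ld (a ** b) ((a ** x) ** b).
Proof. reflexivity. Qed.

Lemma inner_Lword a b : inner_word (Lword a b).
Proof. unfold inner_word. rewrite act_Lword, mul1r. apply ldiv_unique, mul1r. Qed.

Lemma inner_Mword a b : inner_word (Mword a b).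
Proof. unfold inner_word. rewrite act_Mword, mul1r. apply ldiv_unique, mul1r. Qed.

Lemma mul_Lword P q e : P ** (q ** e) = (P ** q) ** act (Lword P q) e.
Proof. rewrite act_Lword, mul_ldiv. auto. Qed.

Lemma Lword_fix_l a b : act (Lword a b) a = a.
Proof.
  rewrite act_Lword. apply ldiv_unique. rewrite (hcomm b a), (hcomm a (a ** b)). auto.
Qed.

(** * The centre and the second centre *)

Definition central n := forall w, inner_word w -> act w n = n.

Definition central2 u := forall w, inner_word w -> exists n, central n /\ act w u = u ** n.

Lemma mulA_central n a b : central n -> a ** (b ** n) = (a ** b) ** n.
Proof.
  intro Hn. pose proof (Hn (Lword a b) (inner_Lword a b)) as H. rewrite act_Lword in H.
  rewrite <- H at 2. rewrite mul_ldiv. auto.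
Qed.

Lemma mulAC_central n a b : central n -> (a ** n) ** b = (a ** b) ** n.
Proof. intro Hn. rewrite hcomm, mulA_central by auto. rewrite (hcomm b a). auto. Qed.

Lemma ldiv_mul_central X Y n : central n -> ld (X ** n) (Y ** n) = ld X Y.
Proof. intro Hn. apply ldiv_unique. rewrite mulAC_central by auto. rewrite mul_ldiv. auto. Qed.

Lemma central_one : central 1.
Proof. intros w Hw. exact Hw. Qed.

Lemma central_mul n m : central n -> central m -> central (n ** m).
Proof. intros Hn Hm w Hw. rewrite inner_mul, Hn, Hm; auto. Qed.

Lemma central_ldiv n m : central n -> central m -> central (ld n m).
Proof. intros Hn Hm w Hw. rewrite inner_ldiv, Hn, Hm; auto. Qed.

Lemma central_rdiv n m : central n -> central m -> central (rd n m).
Proof. intros Hn Hm w Hw. rewrite inner_rdiv, Hn, Hm; auto. Qed.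

Ltac central :=
  solve [repeat first [ assumption | apply central_one | apply central_rdiv
                      | apply central_ldiv | apply central_mul ]].

Lemma central2_mul_central k n : central2 k -> central n -> central2 (k ** n).
Proof.
  intros Hk Hn w Hw. destruct (Hk w Hw) as [m [Hm E]]. exists m. split; auto.
  rewrite inner_mul, E, (Hn w Hw) by auto. apply mulAC_central; auto.
Qed.

Lemma Zc1_central n : Zc Q 1 n -> central n.
Proof.
  intros H w Hw. destruct (H w) as [m [Hm1 Hm2]].
  - exists 1. split; auto. rewrite mul1r. exact Hw.
  - subst m. rewrite mul1r in Hm2. auto.
Qed.

Lemma Zc2_central2 u : Zc Q 2 u -> central2 u.
Proof.
  intros H w Hw. destruct (H w) as [n [Hn1 Hn2]].
  - exists 1. split.
    + intros w' H'. exact H'.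
    + rewrite mul1r. exact Hw.
  - exists n. split; auto. apply Zc1_central; auto.
Qed.

Lemma central2_mulAC q c eta :
  central2 eta -> exists n, central n /\ (q ** eta) ** c = ((q ** c) ** eta) ** n.
Proof.
  intro He. destruct (He (Mword q c) (inner_Mword q c)) as [n [Hn E]].
  rewrite act_Mword in E. exists n. split; auto.
  rewrite <- (mulA_central n) by auto. rewrite <- E. rewrite mul_ldiv. auto.
Qed.

Lemma central2_mulA P s eta :
  central2 eta -> exists n, central n /\ P ** (s ** eta) = ((P ** s) ** eta) ** n.
Proof.
  intro He. destruct (He (Lword P s) (inner_Lword P s)) as [n [Hn E]].
  rewrite act_Lword in E. exists n. split; auto.
  rewrite <- (mulA_central n) by auto. rewrite <- E. rewrite mul_ldiv. auto.
Qed.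

Lemma assoc_central_r a b n : central n -> assoc Q a b n = 1.
Proof.
  intro Hn. unfold assoc. rewrite (mulA_central n a b) by auto.
  apply ldiv_unique, mul1r.
Qed.

Lemma assoc_central_m a b n : central n -> assoc Q a n b = 1.
Proof.
  intro Hn. unfold assoc.
  rewrite (hcomm n b), (mulA_central n a b), (mulAC_central n a b) by auto.
  apply ldiv_unique, mul1r.
Qed.

Lemma assoc_mul_central a b c n1 n2 n3 : central n1 -> central n2 -> central n3 ->
  assoc Q (a ** n1) (b ** n2) (c ** n3) = assoc Q a b c.
Proof.
  intros H1 H2 H3. unfold assoc.
  rewrite (mulAC_central n2 b (c ** n3)), (mulA_central n3 b c), (mulAC_central n1 a),
    (mulA_central n2 a), (mulA_central n3 a) by auto.
  rewrite (mulAC_central n1 a (b ** n2)), (mulA_central n2 a b),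
    (mulAC_central n1 ((a ** b) ** n2)), (mulAC_central n2 (a ** b)),
    (mulA_central n3 (a ** b) c) by auto.
  rewrite !ldiv_mul_central by auto. auto.
Qed.

Lemma assoc_central2_m_central a b e : central2 e -> central (assoc Q a e b).
Proof.
  intro He. destruct (central2_mulAC a b e He) as [n1 [Hn1 F1]].
  destruct (central2_mulA a b e He) as [n2 [Hn2 F2]]. rewrite (hcomm b e) in F2.
  unfold assoc. rewrite F1, F2.
  replace (ld (((a ** b) ** e) ** n2) (((a ** b) ** e) ** n1)) with (ld n2 n1).
  - central.
  - symmetry. apply ldiv_unique. rewrite <- mulA_central by central.
    rewrite mul_ldiv. auto.
Qed.

Lemma assoc_central2_r a b u :
  central2 u -> exists g, central g /\ act (Lword a b) u = u ** g /\ assoc Q a b u = rd 1 g.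
Proof.
  intro Hu. destruct (Hu (Lword a b) (inner_Lword a b)) as [g [Hg E]].
  exists g. split; [auto | split; auto].
  assert (Eu : a ** (b ** u) = ((a ** b) ** u) ** g).
  { rewrite act_Lword in E. rewrite <- (mulA_central g) by auto. rewrite <- E, mul_ldiv. auto. }
  unfold assoc. rewrite Eu. apply ldiv_unique.
  rewrite <- mulA_central by central. rewrite (hcomm g), rdiv_mul, mul1r. auto.
Qed.

Lemma assoc_central2_r_central a b u : central2 u -> central (assoc Q a b u).
Proof. intro Hu. destruct (assoc_central2_r a b u Hu) as [g [Hg [_ ->]]]. central. Qed.

Lemma Lword_central2 a b u : central2 u -> act (Lword a b) u ** assoc Q a b u = u.
Proof.
  intro Hu. destruct (assoc_central2_r a b u Hu) as [g [Hg [-> ->]]].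
  rewrite <- mulA_central by central. rewrite (hcomm g), rdiv_mul, mul1r. auto.
Qed.

Lemma assoc_r_comm_of_assoc_m a b u : central2 u -> assoc Q a u b = 1 ->
  assoc Q a b u = assoc Q b a u.
Proof.
  intros Hu H. unfold assoc in H.
  assert (E : (a ** u) ** b = a ** (u ** b)).
  { rewrite <- (mul1r Q (a ** (u ** b))), <- H, mul_ldiv. auto. }
  rewrite (hcomm u b), (mul_Lword a b u), (hcomm (a ** u) b), (mul_Lword b a u),
    (hcomm b a) in E.
  apply mul_lcancel in E. apply (mul_lcancel (act (Lword a b) u)).
  rewrite Lword_central2, <- E, Lword_central2 by auto. auto.
Qed.

(** * Elements fixed by the inner mappings that are trivial modulo the centre *)

Definition trivial_mod_center w :=
  inner_word w /\ forall c, exists n, central n /\ act w c = c ** n.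

Definition rigid e := forall w, trivial_mod_center w -> act w e = e.

Lemma rigid_assoc a b c : rigid (assoc Q a b c).
Proof.
  intros w [Hw HZ]. rewrite inner_assoc by auto.
  destruct (HZ a) as [n1 [H1 ->]]. destruct (HZ b) as [n2 [H2 ->]].
  destruct (HZ c) as [n3 [H3 ->]]. apply assoc_mul_central; auto.
Qed.

Lemma rigid_of_mul_central e u : rigid u -> central (e ** u) -> rigid e.
Proof.
  intros Hu Heu w Hw. apply (mul_rcancel u). rewrite <- (Hu w Hw) at 1.
  destruct Hw as [Hw _]. rewrite <- inner_mul by auto. auto.
Qed.

Lemma trivial_mod_center_Lword s t : central2 t -> trivial_mod_center (Lword s t).
Proof.
  intro Ht. split; [apply inner_Lword | intro c].
  destruct (central2_mulAC s c t Ht) as [n1 [Hn1 F1]].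
  destruct (central2_mulA s c t Ht) as [n2 [Hn2 F2]].
  rewrite (hcomm c t) in F2.
  exists (rd n2 n1). split; [central |].
  rewrite act_Lword. apply ldiv_unique. rewrite (mulA_central (rd n2 n1)) by central.
  rewrite F1, F2, <- (mulA_central (rd n2 n1)) by central.
  rewrite (hcomm n1), rdiv_mul. auto.
Qed.

Lemma mulA_central2_rigid X t s : central2 t -> rigid s -> X ** (t ** s) = (X ** t) ** s.
Proof.
  intros Ht Hs. pose proof (Hs _ (trivial_mod_center_Lword X t Ht)) as E.
  rewrite act_Lword in E. rewrite <- E at 2. rewrite mul_ldiv. auto.
Qed.

Lemma mulAC_central2_rigid S t e : central2 t -> rigid t -> central2 e -> rigid e ->
  (S ** t) ** e = (S ** e) ** t.
Proof.
  intros. rewrite <- (mulA_central2_rigid S t e), <- (mulA_central2_rigid S e t) by auto.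
  rewrite (hcomm t e). auto.
Qed.

Definition transl_inv (t : transl Q) : transl Q :=
  match t with
  | TL _ a => TLi Q a | TR _ a => TRi Q a | TLi _ a => TL Q a | TRi _ a => TR Q a
  end.

Definition word_inv (w : list (transl Q)) := rev (map transl_inv w).

Lemma act_cat (w1 w2 : list (transl Q)) (x : Q) : act (w1 ++ w2) x = act w1 (act w2 x).
Proof. apply fold_right_app. Qed.

Lemma act_word_invK (w : list (transl Q)) (x : Q) : act (word_inv w) (act w x) = x.
Proof.
  revert x. induction w as [|t w IH]; intro x; auto.
  unfold word_inv in *. simpl. rewrite act_cat.
  destruct t; simpl; rewrite ?ldiv_mul, ?mul_ldiv, ?mul_rdiv, ?rdiv_mul; apply IH.
Qed.

Lemma act_wordK_inv (w : list (transl Q)) (x : Q) : act w (act (word_inv w) x) = x.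
Proof.
  revert x. induction w as [|t w IH]; intro x; auto.
  unfold word_inv in *. simpl. rewrite act_cat.
  change (act (t :: w) ?z) with (transl_app t (act w z)). rewrite IH.
  destruct t; simpl; rewrite ?ldiv_mul, ?mul_ldiv, ?mul_rdiv, ?rdiv_mul; auto.
Qed.

Lemma inner_word_inv w : inner_word w -> inner_word (word_inv w).
Proof. unfold inner_word. intro H. rewrite <- H at 1. apply act_word_invK. Qed.

Lemma Lword_mul_central2 P q eta c : central2 eta ->
  exists m, central m /\ act (Lword P (q ** eta)) c = act (Lword P q) c ** m.
Proof.
  intro Heta. rewrite !act_Lword.
  set (r := ld (P ** q) (P ** (q ** c))).
  assert (Er : P ** (q ** c) = (P ** q) ** r) by (unfold r; rewrite mul_ldiv; auto).
  destruct (central2_mulAC q c eta Heta) as [n1 [Hn1 F1]].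
  destruct (central2_mulA P (q ** c) eta Heta) as [n2 [Hn2 F2]].
  destruct (central2_mulA P q eta Heta) as [n3 [Hn3 F3]].
  destruct (central2_mulAC (P ** q) r eta Heta) as [n4 [Hn4 F4]].
  set (m := rd (n2 ** n1) (n4 ** n3)).
  assert (Hm : central m) by (unfold m; central).
  exists m. split; auto. apply ldiv_unique.
  rewrite F1, F3, (mulA_central n1 P), F2, Er by auto.
  rewrite (mulAC_central n3), (mulA_central m), F4 by auto.
  set (B := ((P ** q) ** r) ** eta).
  rewrite <- (mulA_central m B n4), <- (mulA_central n3 B (n4 ** m)),
    <- (mulA_central n1 B n2) by central.
  f_equal. rewrite (hcomm n4 m), <- (mulA_central n3 m) by auto.
  unfold m. rewrite rdiv_mul. auto.
Qed.

(* [L(P,q)^{-1} L(P,q eta)] is trivial modulo the centre by the previous lemma. *)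
Lemma Lword_mul_central2_rigid P q eta e : central2 eta -> rigid e ->
  act (Lword P (q ** eta)) e = act (Lword P q) e.
Proof.
  intros Heta He.
  set (psi := word_inv (Lword P q) ++ Lword P (q ** eta)).
  assert (Hinv : inner_word (word_inv (Lword P q))) by apply inner_word_inv, inner_Lword.
  assert (Hpsi : trivial_mod_center psi).
  { split.
    - unfold inner_word, psi. rewrite act_cat, (inner_Lword P (q ** eta)). auto.
    - intro c. destruct (Lword_mul_central2 P q eta c Heta) as [m [Hm E]].
      exists m. split; auto. unfold psi.
      rewrite act_cat, E, inner_mul, act_word_invK, (Hm _ Hinv) by auto. auto. }
  pose proof (He psi Hpsi) as E. unfold psi in E. rewrite act_cat in E.
  rewrite <- E at 2. rewrite act_wordK_inv. auto.
Qed.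

Lemma assoc_m_mul_central2 p q eta e : central2 eta -> central2 e -> rigid e ->
  assoc Q p (q ** eta) e = assoc Q p q e.
Proof.
  intros Heta He Ge. apply (mul_lcancel (act (Lword p q) e)).
  rewrite <- (Lword_mul_central2_rigid p q eta e) at 1 by auto.
  rewrite !Lword_central2 by auto. auto.
Qed.

(** * Consequences of class at most three *)

Section ClassAtMostThree.
Hypothesis hZ3 : forall x : Q, Zc Q 3 x.

Lemma inner_word_mod_Z2 w c : inner_word w -> exists k, central2 k /\ act w c = c ** k.
Proof.
  intro Hw. destruct (hZ3 c w) as [k [Hk1 Hk2]].
  - exists 1. split.
    + intros w' H'. exact H'.
    + rewrite mul1r. exact Hw.
  - exists k. split; auto. apply Zc2_central2; auto.
Qed.

Lemma assoc_central2 a b c : central2 (assoc Q a b c).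
Proof.
  set (W := [TLi Q (b ** c); TR Q c; TR Q b]).
  assert (HW : inner_word W).
  { unfold inner_word, W. simpl. rewrite mul1l. apply ldiv_unique, mul1r. }
  destruct (inner_word_mod_Z2 W a HW) as [k [Hk E]]. unfold W in E. simpl in E.
  assert (E2 : (a ** b) ** c = (b ** c) ** (a ** k)).
  { rewrite <- E. rewrite mul_ldiv. auto. }
  destruct (central2_mulAC a (b ** c) k Hk) as [n [Hn E3]].
  unfold assoc. rewrite E2, (hcomm (b ** c)), E3, <- (mulA_central n) by auto.
  rewrite ldiv_mul. apply central2_mul_central; auto.
Qed.

Lemma assoc_mul_assoc_rev a b c : assoc Q a b c ** assoc Q c b a = 1.
Proof.
  assert (E : assoc Q c b a = ld ((a ** b) ** c) (a ** (b ** c))).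
  { unfold assoc.
    rewrite (hcomm b a), (hcomm c (a ** b)), (hcomm c b), (hcomm (b ** c) a). auto. }
  rewrite E. apply (mul_lcancel (a ** (b ** c))).
  rewrite mulA_central2_rigid by (rewrite <- ?E; auto using assoc_central2, rigid_assoc).
  unfold assoc. rewrite !mul_ldiv, mul1r. auto.
Qed.

(* [(a,b,d)] is [twist (a ** b) (Lword a b) [] d] and [(a,d,b)] is
   [twist (a ** b) (Lword a b) (Mword a b) d]. *)
Definition twist P sigma rho d := ld (P ** act sigma d) (P ** act rho d).

Lemma twist_mul P d e rho sigma : inner_word rho -> inner_word sigma ->
  central2 e -> rigid e ->
  central2 (twist P sigma rho d) -> rigid (twist P sigma rho d) ->
  twist P sigma rho (d ** e) = twist P sigma rho d ** twist P sigma rho e.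
Proof.
  intros Hr Hs He Ge Zt0 Gt0. unfold twist in *.
  set (t0 := ld (P ** act sigma d) (P ** act rho d)) in *.
  set (t1 := ld (P ** act sigma e) (P ** act rho e)).
  destruct (He rho Hr) as [r [Hr' Er]]. destruct (He sigma Hs) as [s [Hs' Es]].
  destruct (inner_word_mod_Z2 rho d Hr) as [h1 [Hh1 Eh1]].
  destruct (inner_word_mod_Z2 sigma d Hs) as [h2 [Hh2 Eh2]].
  destruct (He (Lword P d) (inner_Lword P d)) as [g [Hg Eg]].
  assert (I1 : act (Lword P (act rho d)) e = e ** g)
    by (rewrite Eh1, Lword_mul_central2_rigid; auto).
  assert (I2 : act (Lword P (act sigma d)) e = e ** g)
    by (rewrite Eh2, Lword_mul_central2_rigid; auto).
  assert (Et0 : P ** act rho d = (P ** act sigma d) ** t0)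
    by (unfold t0; rewrite mul_ldiv; auto).
  assert (Et1 : P ** act rho e = (P ** act sigma e) ** t1)
    by (unfold t1; rewrite mul_ldiv; auto).
  assert (Hrs : r = t1 ** s).
  { rewrite Er, Es, (mulA_central r), (mulA_central s) in Et1 by auto.
    apply (mul_lcancel (P ** e)).
    rewrite Et1, (mulAC_central s), (mulA_central s) by auto. auto. }
  assert (Ht1 : central t1).
  { replace t1 with (rd r s) by (apply rdiv_unique; auto). central. }
  apply ldiv_unique.
  rewrite !inner_mul, Er, Es by auto.
  rewrite (mulA_central r (act rho d) e), (mulA_central s (act sigma d) e),
    (mulA_central r P), (mulA_central s P), (mul_Lword P (act rho d) e),
    (mul_Lword P (act sigma d) e), I1, I2, Et0 by auto.
  set (S := P ** act sigma d).
  rewrite (mulA_central g S), (mulA_central g (S ** t0)), (mulA_central t1 _ t0) by auto.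
  rewrite (mulAC_central s _ t0), (mulAC_central g _ t0) by auto.
  rewrite (mulAC_central2_rigid S e t0) by auto.
  rewrite Hrs, (mulA_central s _ t1) by auto. apply mulAC_central; auto.
Qed.

Lemma assoc_mul_r a b d e : central2 e -> rigid e ->
  assoc Q a b (d ** e) = assoc Q a b d ** assoc Q a b e.
Proof.
  intros He Ge.
  assert (H : forall w, assoc Q a b w = twist (a ** b) (Lword a b) [] w)
    by (intro; unfold twist; rewrite act_Lword, mul_ldiv; reflexivity).
  rewrite !H. apply twist_mul; try rewrite <- H;
    auto using inner_Lword, assoc_central2, rigid_assoc; reflexivity.
Qed.

Lemma assoc_mul_m a b d e : central2 e -> rigid e ->
  assoc Q a (d ** e) b = assoc Q a d b ** assoc Q a e b.
Proof.
  intros He Ge.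
  assert (H : forall w, assoc Q a w b = twist (a ** b) (Lword a b) (Mword a b) w)
    by (intro; unfold twist, assoc;
        rewrite act_Lword, act_Mword, !mul_ldiv, (hcomm w b); reflexivity).
  rewrite !H. apply twist_mul; try rewrite <- H;
    auto using inner_Lword, inner_Mword, assoc_central2, rigid_assoc.
Qed.

Lemma Lword_ldiv_central2 a b c : central2 (ld c (act (Lword a b) c)).
Proof.
  destruct (inner_word_mod_Z2 (Lword a b) c (inner_Lword a b)) as [k [Hk ->]].
  rewrite ldiv_mul. auto.
Qed.

Lemma Lword_ldiv_mul_assoc_central a b c :
  central (ld c (act (Lword a b) c) ** assoc Q a b c).
Proof.
  destruct (inner_word_mod_Z2 (Lword a b) c (inner_Lword a b)) as [k [Hk Ek]].
  rewrite Ek, ldiv_mul.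
  set (S := (a ** b) ** c). set (t := assoc Q a b c).
  assert (E1 : S = (a ** (b ** c)) ** t) by (unfold t, assoc; rewrite mul_ldiv; auto).
  assert (E2 : a ** (b ** c) = (a ** b) ** (c ** k))
    by (rewrite <- Ek, act_Lword, mul_ldiv; auto).
  destruct (central2_mulA (a ** b) c k Hk) as [n [Hn E3]].
  destruct (central2_mulA S k t (assoc_central2 a b c)) as [m [Hm E4]].
  rewrite E2, E3 in E1. fold S in E1.
  assert (E5 : S ** m = (S ** (k ** t)) ** n).
  { rewrite E4. rewrite E1 at 1.
    rewrite (mulAC_central n), (mulAC_central m _ n) by auto. auto. }
  rewrite <- (mulA_central n) in E5 by auto. apply mul_lcancel in E5.
  replace (k ** t) with (rd m n) by (apply rdiv_unique; auto). central.
Qed.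

Lemma Lword_ldiv_rigid a b c : rigid (ld c (act (Lword a b) c)).
Proof.
  apply (rigid_of_mul_central _ (assoc Q a b c));
    auto using rigid_assoc, Lword_ldiv_mul_assoc_central.
Qed.

(* Apply [L(a,b)] to [(a,a,b)] and expand. *)
Lemma assoc_aa_abb a b : assoc Q a a (assoc Q a b b) = assoc Q a b (assoc Q a a b).
Proof.
  set (e := ld b (act (Lword a b) b)).
  assert (Lb : act (Lword a b) b = b ** e) by (unfold e; rewrite mul_ldiv; auto).
  assert (Ze : central2 e) by apply Lword_ldiv_central2.
  assert (Re : rigid e) by apply Lword_ldiv_rigid.
  assert (Hz : central (assoc Q a a e)) by (apply assoc_central2_r_central; auto).
  assert (E : assoc Q a a e ** assoc Q a b (assoc Q a a b) = 1).
  { pose proof (Lword_central2 a b (assoc Q a a b) (assoc_central2 _ _ _)) as K.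
    rewrite inner_assoc, Lword_fix_l, Lb, assoc_mul_r in K by auto using inner_Lword.
    apply (mul_lcancel (assoc Q a a b)). rewrite mul1r, mulA_central; auto.
    apply assoc_central2_r_central, assoc_central2. }
  assert (F : assoc Q a a e ** assoc Q a a (assoc Q a b b) = 1).
  { rewrite <- assoc_mul_r by auto using assoc_central2, rigid_assoc.
    apply assoc_central_r, Lword_ldiv_mul_assoc_central. }
  apply (mul_lcancel (assoc Q a a e)). rewrite E, F. auto.
Qed.

(* Apply [L(a,a)] to [(a,b,b)] and expand; this shows [(a,(a,a,b),b) = 1]. *)
Lemma assoc_ab_aab_comm a b : assoc Q a b (assoc Q a a b) = assoc Q b a (assoc Q a a b).
Proof.
  apply assoc_r_comm_of_assoc_m; [apply assoc_central2 |].
  set (e := ld b (act (Lword a a) b)).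
  assert (Lb : act (Lword a a) b = b ** e) by (unfold e; rewrite mul_ldiv; auto).
  assert (Ze : central2 e) by apply Lword_ldiv_central2.
  assert (Re : rigid e) by apply Lword_ldiv_rigid.
  assert (Hm : central (assoc Q a e b)) by (apply assoc_central2_m_central; auto).
  assert (Hr : central (assoc Q a b e)) by (apply assoc_central2_r_central; auto).
  assert (E2 : (assoc Q a e b ** assoc Q a b e) ** assoc Q a a (assoc Q a b b) = 1).
  { pose proof (Lword_central2 a a (assoc Q a b b) (assoc_central2 _ _ _)) as K.
    rewrite inner_assoc, Lword_fix_l, Lb, assoc_mul_r, assoc_mul_m,
      assoc_m_mul_central2 in K by auto using inner_Lword.
    apply (mul_lcancel (assoc Q a b b)).
    rewrite mul1r, (mulA_central (assoc Q a a (assoc Q a b b))), (mulA_central (assoc Q a b e))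
      by auto using assoc_central2_r_central, assoc_central2.
    auto. }
  assert (E3 : assoc Q a b e ** assoc Q a b (assoc Q a a b) = 1).
  { rewrite <- assoc_mul_r by auto using assoc_central2, rigid_assoc.
    apply assoc_central_r, Lword_ldiv_mul_assoc_central. }
  assert (Hem : assoc Q a e b = 1).
  { rewrite assoc_aa_abb, <- mulA_central, E3, mul1r in E2
      by auto using assoc_central2_r_central, assoc_central2.
    auto. }
  assert (F : assoc Q a (e ** assoc Q a a b) b = assoc Q a e b ** assoc Q a (assoc Q a a b) b)
    by (apply assoc_mul_m; auto using assoc_central2, rigid_assoc).
  rewrite assoc_central_m, Hem, mul1l in F by apply Lword_ldiv_mul_assoc_central.
  auto.
Qed.

Lemma assoc_r_assoc_rev p q a b c :
  assoc Q p q (assoc Q a b c) ** assoc Q p q (assoc Q c b a) = 1.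
Proof.
  rewrite <- assoc_mul_r by auto using assoc_central2, rigid_assoc.
  rewrite assoc_mul_assoc_rev. apply assoc_central_r, central_one.
Qed.

End ClassAtMostThree.
End CommutativeAutomorphicLoop.

Theorem lemma4p1 (Q : loop) (hcomm : commutative Q) (haut : automorphic Q)
  (hnil : nilpotency_class Q 3) (x y : Q) :
  let u1 := assoc Q x x y in
  let u2 := assoc Q x y y in
  let z2 := assoc Q x x u2 in
  let z3 := assoc Q x y u1 in
  let z4 := assoc Q x y u2 in
  let z5 := assoc Q y x u1 in
  let z6 := assoc Q y x u2 in
  let z7 := assoc Q y y u1 in
  (z2 = z3 /\ z3 = z5) /\ (z4 = z6 /\ z6 = z7).
Proof.
  cbv zeta. destruct hnil as [hZ3 _].
  pose proof (assoc_aa_abb Q hcomm haut hZ3 y x) as Eyx1.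
  pose proof (assoc_ab_aab_comm Q hcomm haut hZ3 y x) as Eyx2.
  pose proof (assoc_r_assoc_rev Q hcomm haut hZ3) as Hrev.
  split; split.
  - apply (assoc_aa_abb Q hcomm haut hZ3).
  - apply (assoc_ab_aab_comm Q hcomm haut hZ3).
  - apply (mul_eq1_lcancel Q _ _ _ (Hrev x y x y y)).
    rewrite <- Eyx2. apply Hrev.
  - apply (mul_eq1_lcancel Q _ _ _ (Hrev y x x y y)).
    rewrite <- Eyx1. apply Hrev.
Qed.
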